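(* Let $B,\lambda>0$, $q\in\mathbb N$, $\alpha\in(0,1]$, $\beta=q+\alpha\ge1/2$, and let $\mathcal F$ be the set of functions $f:[0,1]\to\mathbb R$ that are $q$ times differentiable with $\|f^{(k)}\|_\infty\le B$ for all $k\in\{0,\ldots,q\}$ and $|f^{(q)}(x)-f^{(q)}(y)|\le\lambda|x-y|^\alpha$ for all $x,y\in[0,1]$. Let $\gamma>0$, $\delta_x=2(q!\gamma/(2\lambda))^{1/\beta}$, $\delta_y=\gamma/e$, and assume $1/\delta_x$ and $2B/\delta_y$ are integers. Then, with $\mathcal F^{(0)}$ and $\mathcal F^{(M)}$ as defined in the context: (i) for every $f\in\mathcal F$ there is $g\in\mathcal F^{(0)}$ with $\|f-g\|_\infty\le\gamma$; (ii) for every $M\ge1$ and every $f\in\mathcal F$ there is $g\in\mathcal F^{(M)}$ with $\|f-g\|_\infty\le\gamma/2^M$.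
   Context: $[x]_c=\min\{c,\max\{-c,x\}\}$ denotes clipping. Let $I_a=[(a-1)\delta_x,a\delta_x)$, $a=1,\ldots,1/\delta_x$ (last closed at $1$), with center $x_a$. For $m\ge1$ split $I_a$ into $4^m$ consecutive subintervals $I_a^{(m,n)}$, $n=1,\ldots,4^m$, of length $\delta_x/4^m$, with centers $x_a^{(m,n)}$; for $m\ge2$ let $n_{m-1}$ be the index with $I_a^{(m,n)}\subset I_a^{(m-1,n_{m-1})}$. Let $\mathcal Y^{(m)}=\{-B+j\delta_y/2^m:j=0,\ldots,2^{m+1}B/\delta_y\}$ for $m\ge0$. Let $\mathcal P_a^{(0)}$ be the set of functions $x\mapsto[\sum_{i=0}^q\frac{a_i}{i!}(x-x_a)^i]_B$ with $a_0,\ldots,a_q\in\mathcal Y^{(0)}$, and $\mathcal P_a^{(m,n)}$ the set of functions $x\mapsto[\sum_{i=0}^q\frac{a_i}{i!}(x-x_a^{(m,n)})^i]_B$ with $a_i\in\mathcal Y^{(m)}$. Let $\mathcal Q_a^{(m,n)}=\{[P-P']_{3\gamma/2^m}:P\in\mathcal P_a^{(m,n)},P'\in\mathcal P_a^{(m-1,n_{m-1})}\}$ for $m\ge2$, and with $\mathcal P_a^{(0)}$ in place of $\mathcal P_a^{(m-1,n_{m-1})}$ for $m=1$. $\mathcal F^{(0)}$ is the set of functions $\sum_{a}P_a^{(0)}(x)\mathbb 1\{x\in I_a\}$ with $P_a^{(0)}\in\mathcal P_a^{(0)}$; $\mathcal F^{(M)}$ is the set of functions $\sum_aP_a^{(0)}(x)\mathbb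 1\{x\in I_a\}+\sum_{m=1}^M\sum_a\sum_{n=1}^{4^m}Q_a^{(m,n)}(x)\mathbb 1\{x\in I_a^{(m,n)}\}$ with $P_a^{(0)}\in\mathcal P_a^{(0)}$, $Q_a^{(m,n)}\in\mathcal Q_a^{(m,n)}$. *)

From Stdlib Require Import Reals ClassicalDescription Factorial.
From Coquelicot Require Import Coquelicot.
Open Scope R_scope.

(* x^a for x >= 0, with the usual convention 0^a = 0 (a > 0). *)
Definition powr (x a : R) : R := if Rle_dec x 0 then 0 else Rpower x a.

Definition clip (c x : R) : R := Rmin c (Rmax (- c) x).

Definition ind (P : Prop) : R := if excluded_middle_informative P then 1 else 0.

(* g has derivative l at x relative to [0,1] (one-sided at the endpoints) *)
Definition derive01 (g : R -> R) (x l : R) : Prop :=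
  filterlim (fun y => (g y - g x) / (y - x))
    (within (fun y => 0 <= y <= 1 /\ y <> x) (locally x)) (locally l).

Definition HolderClass (B lam : R) (q : nat) (alpha : R) (f : R -> R) : Prop :=
  exists D : nat -> R -> R,
    (forall x, 0 <= x <= 1 -> D 0%nat x = f x) /\
    (forall k x, (k < q)%nat -> 0 <= x <= 1 -> derive01 (D k) x (D (S k) x)) /\
    (forall k x, (k <= q)%nat -> 0 <= x <= 1 -> Rabs (D k x) <= B) /\
    (forall x y, 0 <= x <= 1 -> 0 <= y <= 1 ->
       Rabs (D q x - D q y) <= lam * powr (Rabs (x - y)) alpha).

Section Classes.
Variables (B dx dy gamma : R) (q N : nat).

Definition inIv (lo hi x : R) : Prop := (lo <= x < hi) \/ (x = hi /\ hi = 1).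

(* I_a, a = 1..N *)
Definition inI (a : nat) (x : R) : Prop := inIv ((INR a - 1) * dx) (INR a * dx) x.
Definition xc (a : nat) : R := (INR a - 1/2) * dx.

(* I_a^(m,n), n = 1..4^m *)
Definition inIsub (a m n : nat) (x : R) : Prop :=
  inIv ((INR a - 1) * dx + (INR n - 1) * dx / 4 ^ m)
       ((INR a - 1) * dx + INR n * dx / 4 ^ m) x.
Definition xcsub (a m n : nat) : R := (INR a - 1) * dx + (INR n - 1/2) * dx / 4 ^ m.

Definition inY (m : nat) (y : R) : Prop :=
  exists j : nat, INR j <= 2 ^ (m + 1) * B / dy /\ y = - B + INR j * dy / 2 ^ m.

Definition taylor (c : nat -> R) (x0 x : R) : R :=
  sum_n_m (fun i => c i / INR (fact i) * (x - x0) ^ i) 0 q.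

Definition inP0 (a : nat) (g : R -> R) : Prop :=
  exists c : nat -> R, (forall i, (i <= q)%nat -> inY 0 (c i)) /\
    g = (fun x => clip B (taylor c (xc a) x)).

Definition inP (a m n : nat) (g : R -> R) : Prop :=
  exists c : nat -> R, (forall i, (i <= q)%nat -> inY m (c i)) /\
    g = (fun x => clip B (taylor c (xcsub a m n) x)).

Definition inQ (a m n : nat) (h : R -> R) : Prop :=
  exists P P' : R -> R, inP a m n P /\
    ((m = 1%nat /\ inP0 a P') \/
     ((2 <= m)%nat /\ exists n', (1 <= n' <= 4 ^ (m - 1))%nat /\
          (forall x, inIsub a m n x -> inIsub a (m - 1) n' x) /\
          inP a (m - 1) n' P')) /\
    h = (fun x => clip (3 * gamma / 2 ^ m) (P x - P' x)).

Definition inF0 (g : R -> R) : Prop :=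
  exists P0 : nat -> R -> R,
    (forall a, (1 <= a <= N)%nat -> inP0 a (P0 a)) /\
    g = (fun x => sum_n_m (fun a => P0 a x * ind (inI a x)) 1 N).

Definition inFM (M : nat) (g : R -> R) : Prop :=
  exists (P0 : nat -> R -> R) (Q : nat -> nat -> nat -> R -> R),
    (forall a, (1 <= a <= N)%nat -> inP0 a (P0 a)) /\
    (forall m a n, (1 <= m <= M)%nat -> (1 <= a <= N)%nat -> (1 <= n <= 4 ^ m)%nat ->
        inQ a m n (Q m a n)) /\
    g = (fun x => sum_n_m (fun a => P0 a x * ind (inI a x)) 1 N +
          sum_n_m (fun m => sum_n_m (fun a => sum_n_m (fun n =>
             Q m a n x * ind (inIsub a m n x)) 1 (4 ^ m)) 1 N) 1 M).
End Classes.

(* Taylor's theorem with Lagrange remainder, obtained by iterating the Cauchy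
   mean value theorem (only one-sided derivatives are available at 0 and 1), bounds
   the error of the degree-q Taylor polynomial of f at the centre of a cell of
   length dx/4^m by lam (dx/(2 4^m))^beta / q! <= gamma/2^(m+1); this is where the
   choice of dx comes from.  Rounding the q+1 Taylor coefficients to the grid
   Y^(m) of mesh dy/2^m moves the polynomial by at most dy/2^m <= gamma/2^(m+1)
   on the cell, and clipping to [-B, B] only helps because |f| <= B.  So the
   piecewise polynomial of level m is gamma/2^m-close to f.  Consecutive levels
   are then 3 gamma/2^m-close, the clipping in Q_a^(m,n) is inactive, and the sum
   defining F^(M) telescopes to the level-M approximant. *)

From Pilot Require Import Defs.
From Stdlib Require Import Reals Factorial Lra Lia ClassicalDescription IndefiniteDescription.
From Coquelicot Require Import Coquelicot.
Open Scope R_scope.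

Lemma taylor_O c x0 x : taylor 0 c x0 x = c 0%nat.
Proof. unfold taylor. rewrite sum_n_n. simpl. field. Qed.

Lemma taylor_S n c x0 x :
  taylor (S n) c x0 x = taylor n c x0 x + c (S n) / INR (fact (S n)) * (x - x0) ^ S n.
Proof. unfold taylor. rewrite sum_n_Sm; [reflexivity | lia]. Qed.

Lemma taylor_ext n c d x0 x : (forall i, (i <= n)%nat -> c i = d i) ->
  taylor n c x0 x = taylor n d x0 x.
Proof.
  intros Hcd. unfold taylor. apply sum_n_m_ext_loc. intros i Hi. rewrite Hcd; [reflexivity | lia].
Qed.

Lemma taylor_center n c x0 : taylor n c x0 x0 = c 0%nat.
Proof.
  induction n as [|n IH]; [apply taylor_O |].
  rewrite taylor_S, IH, Rminus_diag. simpl. ring.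
Qed.

Lemma taylor_minus n c d x0 x :
  taylor n c x0 x - taylor n d x0 x = taylor n (fun i => c i - d i) x0 x.
Proof.
  induction n as [|n IH]; [rewrite !taylor_O; reflexivity |].
  rewrite !taylor_S, <- IH. field. apply INR_fact_neq_0.
Qed.

Lemma is_derive_monomial K x0 p x :
  is_derive (fun y => K * (y - x0) ^ S p) x (K * (INR (S p) * (x - x0) ^ p)).
Proof.
  auto_derive; [easy |]. rewrite Rmult_1_l.
  destruct p; [reflexivity |]. rewrite (S_INR (S p)). reflexivity.
Qed.

Lemma is_derive_taylor n c x0 x :
  is_derive (taylor (S n) c x0) x (taylor n (fun i => c (S i)) x0 x).
Proof.
  induction n as [|n IH].
  - apply (is_derive_ext (fun y => c 0%nat + c 1%nat * (y - x0))).
    + intros y. rewrite taylor_S, taylor_O. simpl. field.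
    + rewrite taylor_O. auto_derive; [easy | ring].
  - apply (is_derive_ext (fun y => taylor (S n) c x0 y +
             c (S (S n)) / INR (fact (S (S n))) * (y - x0) ^ S (S n))).
    + intros y. rewrite (taylor_S (S n)). reflexivity.
    + rewrite taylor_S. apply (is_derive_plus _ _ _ _ _ IH).
      replace (c (S (S n)) / INR (fact (S n)) * (x - x0) ^ S n) with
        (c (S (S n)) / INR (fact (S (S n))) * (INR (S (S n)) * (x - x0) ^ S n)).
      * apply is_derive_monomial.
      * rewrite (fact_simpl (S n)), mult_INR.
        assert (INR (S (S n)) <> 0) by (apply not_0_INR; lia).
        simpl pred. field. split; [apply INR_fact_neq_0 | assumption].
Qed.

Lemma continuity_pt_taylor n c x0 x : continuity_pt (taylor n c x0) x.
Proof.
  apply derivable_continuous_pt. destruct n as [|n].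
  - exists 0. apply is_derive_Reals.
    apply (is_derive_ext (fun _ => c 0%nat)); [intros; rewrite taylor_O; reflexivity |].
    auto_derive; easy.
  - eexists. apply is_derive_Reals, is_derive_taylor.
Qed.

(** * One-sided derivatives on [0,1] and a Cauchy mean value theorem *)

Lemma derive01_quotient g x l eps : derive01 g x l -> 0 < eps ->
  exists d : posreal, forall y, Rabs (y - x) < d -> 0 <= y <= 1 -> y <> x ->
    Rabs ((g y - g x) / (y - x) - l) < eps.
Proof.
  intros Hg He.
  destruct (Hg (fun z => Rabs (z - l) < eps)) as [d Hd].
  { exists (mkposreal eps He). intros z Hz. exact Hz. }
  exists d. intros y Hy Hy01 Hyx. apply (Hd y Hy). split; assumption.
Qed.

Lemma derive01_interior g x l : 0 < x < 1 -> derive01 g x l -> derivable_pt_lim g x l.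
Proof.
  intros Hx Hg eps He. destruct (derive01_quotient g x l eps Hg He) as [d Hd].
  assert (Hr : 0 < Rmin d (Rmin x (1 - x))).
  { apply Rmin_pos; [apply cond_pos | apply Rmin_pos; lra]. }
  exists (mkposreal _ Hr). intros h Hh0 Hh. simpl in Hh.
  pose proof (Rmin_l d (Rmin x (1 - x))). pose proof (Rmin_r d (Rmin x (1 - x))).
  pose proof (Rmin_l x (1 - x)). pose proof (Rmin_r x (1 - x)).
  apply Rabs_def2 in Hh as Hh'.
  replace h with ((x + h) - x) at 2 by ring.
  apply Hd; [replace (x + h - x) with h by ring | |]; lra.
Qed.

Definition continuous_rel (a b : R) (f : R -> R) (t : R) : Prop :=
  forall eps, 0 < eps -> exists d, 0 < d /\
    forall y, a <= y <= b -> Rabs (y - t) < d -> Rabs (f y - f t) < eps.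

Lemma derive01_continuous_rel g x l a b : 0 <= a -> b <= 1 -> derive01 g x l ->
  continuous_rel a b g x.
Proof.
  intros Ha Hb Hg eps He. destruct (derive01_quotient g x l 1 Hg Rlt_0_1) as [d Hd].
  pose proof (Rabs_pos l).
  exists (Rmin d (eps / (Rabs l + 1))). split.
  { apply Rmin_pos; [apply cond_pos | apply Rdiv_lt_0_compat; lra]. }
  intros y Hy Hyx.
  pose proof (Rmin_l d (eps / (Rabs l + 1))). pose proof (Rmin_r d (eps / (Rabs l + 1))).
  destruct (Req_dec y x) as [->|Hne]; [rewrite Rminus_diag, Rabs_R0; lra |].
  set (s := (g y - g x) / (y - x)).
  assert (Hs : Rabs (s - l) < 1) by (apply Hd; lra).
  replace (g y - g x) with (s * (y - x)) by (unfold s; field; lra).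
  rewrite Rabs_mult.
  assert (Rabs s <= Rabs l + 1).
  { replace s with ((s - l) + l) by ring. pose proof (Rabs_triang (s - l) l). lra. }
  apply Rle_lt_trans with ((Rabs l + 1) * Rabs (y - x)).
  - apply Rmult_le_compat_r; [apply Rabs_pos | assumption].
  - apply Rmult_lt_reg_r with (/ (Rabs l + 1)); [apply Rinv_0_lt_compat; lra |].
    replace ((Rabs l + 1) * Rabs (y - x) * / (Rabs l + 1)) with (Rabs (y - x))
      by (field; lra).
    unfold Rdiv in *. lra.
Qed.

Lemma continuity_pt_continuous_rel f a b t : continuity_pt f t -> continuous_rel a b f t.
Proof.
  intros Hf eps He. destruct (Hf eps He) as [d [Hd Hfd]].
  exists d. split; [assumption |]. intros y Hy Hyt.
  destruct (Req_dec y t) as [->|Hne]; [rewrite Rminus_diag, Rabs_R0; lra |].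
  apply (Hfd y). split; [split; [exact I | auto] | exact Hyt].
Qed.

Lemma continuous_rel_minus f g a b t : continuous_rel a b f t -> continuous_rel a b g t ->
  continuous_rel a b (fun y => f y - g y) t.
Proof.
  intros Hf Hg eps He.
  destruct (Hf (eps / 2)) as [d1 [Hd1 H1]]; [lra |].
  destruct (Hg (eps / 2)) as [d2 [Hd2 H2]]; [lra |].
  exists (Rmin d1 d2). split; [apply Rmin_pos; assumption |].
  intros y Hy Hyt. pose proof (Rmin_l d1 d2). pose proof (Rmin_r d1 d2).
  specialize (H1 y Hy ltac:(lra)). specialize (H2 y Hy ltac:(lra)).
  replace (f y - g y - (f t - g t)) with ((f y - f t) + - (g y - g t)) by ring.
  pose proof (Rabs_triang (f y - f t) (- (g y - g t))). rewrite Rabs_Ropp in *. lra.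
Qed.

Definition clamp (a b y : R) : R := Rmax a (Rmin b y).

Lemma clamp_id a b y : a <= y <= b -> clamp a b y = y.
Proof. intros Hy. unfold clamp. rewrite Rmin_right, Rmax_right; lra. Qed.

Lemma clamp_contract a b y t : a <= b -> a <= t <= b ->
  a <= clamp a b y <= b /\ Rabs (clamp a b y - t) <= Rabs (y - t).
Proof.
  intros Hab Ht. unfold clamp, Rmax, Rmin.
  repeat destruct Rle_dec; split; try lra; unfold Rabs; repeat destruct Rcase_abs; lra.
Qed.

Lemma derivable_pt_lim_clamp h a b t l : a < t < b -> derivable_pt_lim h t l ->
  derivable_pt_lim (fun y => h (clamp a b y)) t l.
Proof.
  intros Ht Hh eps He. destruct (Hh eps He) as [d Hd].
  assert (Hr : 0 < Rmin d (Rmin (t - a) (b - t))).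
  { apply Rmin_pos; [apply cond_pos | apply Rmin_pos; lra]. }
  exists (mkposreal _ Hr). intros u Hu0 Hu. simpl in Hu.
  pose proof (Rmin_l d (Rmin (t - a) (b - t))). pose proof (Rmin_r d (Rmin (t - a) (b - t))).
  pose proof (Rmin_l (t - a) (b - t)). pose proof (Rmin_r (t - a) (b - t)).
  apply Rabs_def2 in Hu as Hu'.
  rewrite !clamp_id by lra. apply Hd; [assumption | lra].
Qed.

Lemma continuity_pt_clamp h a b t : a <= t <= b -> continuous_rel a b h t ->
  continuity_pt (fun y => h (clamp a b y)) t.
Proof.
  intros Ht Hh eps He. destruct (Hh eps He) as [d [Hd Hhd]].
  exists d. split; [assumption |]. intros y [_ Hy]. simpl in *. unfold R_dist in *.
  rewrite (clamp_id a b t) by lra.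
  destruct (clamp_contract a b y t) as [Hc1 Hc2]; [lra | lra |].
  apply Hhd; [assumption | lra].
Qed.

(* Stdlib's [MVT] wants continuity everywhere; clamping to [[a, b]] provides it. *)
Lemma cauchy_mvt_rel (f g f' g' : R -> R) a b : a < b ->
  (forall t, a <= t <= b -> continuous_rel a b f t) ->
  (forall t, a <= t <= b -> continuous_rel a b g t) ->
  (forall t, a < t < b -> derivable_pt_lim f t (f' t)) ->
  (forall t, a < t < b -> derivable_pt_lim g t (g' t)) ->
  exists c, a < c < b /\ (g b - g a) * f' c = (f b - f a) * g' c.
Proof.
  intros Hab Cf Cg Df Dg.
  destruct (MVT (fun y => f (clamp a b y)) (fun y => g (clamp a b y)) a b
     (fun c Hc => exist _ (f' c) (derivable_pt_lim_clamp f a b c _ Hc (Df c Hc)))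
     (fun c Hc => exist _ (g' c) (derivable_pt_lim_clamp g a b c _ Hc (Dg c Hc))) Hab
     (fun t Ht => continuity_pt_clamp f a b t Ht (Cf t Ht))
     (fun t Ht => continuity_pt_clamp g a b t Ht (Cg t Ht))) as [c [Hc E]].
  exists c. split; [assumption |]. simpl in E. rewrite !clamp_id in E by lra. exact E.
Qed.

Lemma powr_ge0 x a : 0 <= powr x a.
Proof. unfold powr. destruct Rle_dec; [lra | left; apply exp_pos]. Qed.

Lemma powr_pos_eq x a : 0 < x -> powr x a = Rpower x a.
Proof. intros Hx. unfold powr. destruct Rle_dec; [lra | reflexivity]. Qed.

Lemma powr_pos x a : 0 < x -> 0 < powr x a.
Proof. intros Hx. rewrite powr_pos_eq by assumption. apply exp_pos. Qed.

Lemma powr_le_compat u v a : 0 <= u <= v -> 0 <= a -> powr u a <= powr v a.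
Proof.
  intros Huv Ha. unfold powr. destruct (Rle_dec u 0), (Rle_dec v 0); try lra.
  - left. apply exp_pos.
  - apply Rle_Rpower_l; lra.
Qed.

Lemma powr_mult_pow t a n : 0 < t -> powr t a * t ^ n = powr t (INR n + a).
Proof.
  intros Ht. unfold powr. destruct Rle_dec; [lra |].
  rewrite <- (Rpower_pow n t Ht), <- Rpower_plus. f_equal. ring.
Qed.

(* [4^-m = 2^(-2m)], and [2 beta >= 1] turns [2^(-2m beta)] into at most [2^-m]. *)
Lemma powr_root_div_pow4 Y beta m : 0 < Y -> 1 / 2 <= beta ->
  powr (powr Y (1 / beta) / 4 ^ m) beta <= Y / 2 ^ m.
Proof.
  intros HY Hbeta.
  assert (E4 : / 4 ^ m = Rpower 2 (- (2 * INR m))).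
  { replace (2 * INR m) with (INR (2 * m)) by (rewrite mult_INR; reflexivity).
    rewrite Rpower_Ropp, Rpower_pow, pow_mult by lra. do 2 f_equal. ring. }
  assert (E2 : / 2 ^ m = Rpower 2 (- INR m))
    by (rewrite Rpower_Ropp, Rpower_pow by lra; reflexivity).
  assert (HYb : 0 < Rpower Y (1 / beta)) by apply exp_pos.
  assert (H2 : 0 < Rpower 2 (- (2 * INR m))) by apply exp_pos.
  rewrite (powr_pos_eq Y) by assumption. unfold Rdiv at 1. rewrite E4.
  rewrite powr_pos_eq by (apply Rmult_lt_0_compat; assumption).
  rewrite <- Rpower_mult_distr, !Rpower_mult by assumption.
  replace (1 / beta * beta) with 1 by (field; lra).
  rewrite Rpower_1 by assumption. unfold Rdiv. rewrite E2.
  apply Rmult_le_compat_l; [lra |]. apply Rle_Rpower; [lra |].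
  pose proof (pos_INR m). nra.
Qed.

(** * Taylor's theorem with Hoelder remainder *)

Section Remainder.
Variables (D : nat -> R -> R) (q : nat) (x0 : R).
Hypothesis D_derive :
  forall k x, (k < q)%nat -> 0 <= x <= 1 -> derive01 (D k) x (D (S k) x).
Hypothesis x0_in : 0 <= x0 <= 1.

Definition remainder (k : nat) (y : R) : R :=
  D k y - taylor (q - k) (fun i => D (k + i)%nat x0) x0 y.

Lemma remainder_center k : remainder k x0 = 0.
Proof. unfold remainder. rewrite taylor_center, Nat.add_0_r. ring. Qed.

Lemma remainder_derive k t : (k < q)%nat -> 0 < t < 1 ->
  derivable_pt_lim (remainder k) t (remainder (S k) t).
Proof.
  intros Hk Ht. apply derivable_pt_lim_minus.
  - apply derive01_interior; [assumption | apply D_derive; [assumption | lra]].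
  - replace (q - k)%nat with (S (q - S k)) by lia.
    rewrite (taylor_ext _ (fun i => D (S k + i)%nat x0) (fun i => D (k + S i)%nat x0))
      by (intros i _; f_equal; lia).
    apply is_derive_Reals, (is_derive_taylor _ (fun i => D (k + i)%nat x0)).
Qed.

Lemma remainder_continuous_rel k a b t : (k < q)%nat -> 0 <= a -> b <= 1 -> a <= t <= b ->
  continuous_rel a b (remainder k) t.
Proof.
  intros Hk Ha Hb Ht. apply continuous_rel_minus.
  - apply (derive01_continuous_rel _ _ (D (S k) t)); [lra | lra |].
    apply D_derive; [assumption | lra].
  - apply continuity_pt_continuous_rel, continuity_pt_taylor.
Qed.

Lemma remainder_mvt_step k p y : (k < q)%nat -> 0 <= y <= 1 -> y <> x0 ->
  exists c, 0 <= c <= 1 /\ c <> x0 /\ Rabs (c - x0) <= Rabs (y - x0) /\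
    (y - x0) ^ S p * remainder (S k) c = remainder k y * (INR (S p) * (c - x0) ^ p).
Proof.
  intros Hk Hy Hyx.
  assert (MV : forall lo hi, lo < hi -> 0 <= lo -> hi <= 1 -> exists c, lo < c < hi /\
    (1 * (hi - x0) ^ S p - 1 * (lo - x0) ^ S p) * remainder (S k) c =
    (remainder k hi - remainder k lo) * (1 * (INR (S p) * (c - x0) ^ p))).
  { intros lo hi Hlh Hlo Hhi.
    apply (cauchy_mvt_rel (remainder k) (fun z => 1 * (z - x0) ^ S p)); [assumption | | | |].
    - intros t Ht. apply remainder_continuous_rel; [assumption | lra ..].
    - intros t Ht. apply continuity_pt_continuous_rel, derivable_continuous_pt.
      eexists. apply is_derive_Reals, is_derive_monomial.
    - intros t Ht. apply remainder_derive; [assumption | lra].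
    - intros t Ht. apply is_derive_Reals, is_derive_monomial. }
  destruct (Rlt_dec x0 y) as [Hlt|Hge].
  - destruct (MV x0 y) as [c [Hc E]]; [lra | lra | lra |].
    rewrite remainder_center, Rminus_diag, pow_i in E by lia.
    exists c. repeat split; try lra. rewrite !Rabs_right; lra.
  - destruct (MV y x0) as [c [Hc E]]; [lra | lra | lra |].
    rewrite remainder_center, Rminus_diag, pow_i in E by lia.
    exists c. repeat split; try lra. rewrite !Rabs_left; lra.
Qed.

Lemma remainder_lagrange d y : (d <= q)%nat -> 0 <= y <= 1 -> y <> x0 ->
  exists xi, 0 <= xi <= 1 /\ Rabs (xi - x0) <= Rabs (y - x0) /\
    remainder (q - d) y = remainder q xi * (y - x0) ^ d / INR (fact d).
Proof.
  revert y. induction d as [|d IH]; intros y Hd Hy Hyx.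
  - exists y. rewrite Nat.sub_0_r. repeat split; try lra. simpl. field.
  - destruct (remainder_mvt_step (q - S d) d y)
    as [c [Hc [Hcx [Hcy E]]]]; [lia | assumption | assumption |].
    destruct (IH c) as [xi [Hxi [Hxic Exi]]]; [lia | assumption | assumption |].
    exists xi. split; [assumption | split; [lra |]].
    replace (S (q - S d)) with (q - d)%nat in E by lia. rewrite Exi in E.
    assert ((c - x0) ^ d <> 0) by (apply pow_nonzero; lra).
    assert (INR (S d) <> 0) by (apply not_0_INR; lia).
    pose proof (INR_fact_neq_0 d).
    rewrite fact_simpl, mult_INR.
    apply (Rmult_eq_reg_r (INR (S d) * (c - x0) ^ d));
      [| apply Rmult_integral_contrapositive; auto].
    rewrite <- E. simpl pow. field. auto.
Qed.

End Remainder.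

Lemma taylor_holder_error lam alpha (f : R -> R) (D : nat -> R -> R) q x0 x :
  0 < lam -> 0 <= alpha ->
  (forall y, 0 <= y <= 1 -> D 0%nat y = f y) ->
  (forall k y, (k < q)%nat -> 0 <= y <= 1 -> derive01 (D k) y (D (S k) y)) ->
  (forall y z, 0 <= y <= 1 -> 0 <= z <= 1 ->
     Rabs (D q y - D q z) <= lam * powr (Rabs (y - z)) alpha) ->
  0 <= x0 <= 1 -> 0 <= x <= 1 ->
  Rabs (f x - taylor q (fun i => D i x0) x0 x) <=
    lam * powr (Rabs (x - x0)) (INR q + alpha) / INR (fact q).
Proof.
  intros Hlam Halpha HD0 HD HH Hx0 Hx.
  pose proof (INR_fact_lt_0 q) as Hfact.
  assert (Hlam_fact : 0 <= lam / INR (fact q)) by (apply Rdiv_le_0_compat; lra).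
  destruct (Req_dec x x0) as [->|Hne].
  - rewrite taylor_center, HD0, Rminus_diag, Rabs_R0 by assumption.
    unfold Rdiv. rewrite Rmult_assoc, (Rmult_comm (powr _ _)), <- Rmult_assoc.
    apply Rmult_le_pos; [assumption | apply powr_ge0].
  - destruct (remainder_lagrange D q x0 HD Hx0 q x (Nat.le_refl q) Hx Hne)
      as [xi [Hxi [Hxix E]]].
    unfold remainder in E. rewrite Nat.sub_diag, Nat.sub_0_r, taylor_O, Nat.add_0_r in E.
    simpl in E. rewrite HD0 in E by assumption.
    rewrite E. unfold Rdiv. rewrite !Rabs_mult, <- RPow_abs.
    rewrite (Rabs_right (/ INR (fact q))) by (left; apply Rinv_0_lt_compat; assumption).
    assert (Hd : 0 < Rabs (x - x0)) by (apply Rabs_pos_lt; lra).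
    rewrite <- (powr_mult_pow _ _ q Hd), <- Rmult_assoc.
    apply Rmult_le_compat_r; [left; apply Rinv_0_lt_compat; assumption |].
    apply Rmult_le_compat_r; [apply pow_le, Rabs_pos |].
    apply Rle_trans with (lam * powr (Rabs (xi - x0)) alpha); [apply HH; assumption |].
    apply Rmult_le_compat_l; [lra |].
    apply powr_le_compat; [split; [apply Rabs_pos | assumption] | assumption].
Qed.

Lemma clip_id c v : Rabs v <= c -> clip c v = v.
Proof.
  intros Hv. apply Rabs_le_between in Hv. unfold clip, Rmin, Rmax.
  repeat destruct Rle_dec; lra.
Qed.

Lemma clip_bound c v : 0 <= c -> Rabs (clip c v) <= c.
Proof. intros Hc. unfold clip, Rmin, Rmax. repeat destruct Rle_dec; apply Rabs_le; lra. Qed.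

Lemma clip_contract c u v : 0 <= c -> Rabs (clip c u - clip c v) <= Rabs (u - v).
Proof.
  intros Hc. unfold clip, Rmin, Rmax.
  repeat destruct Rle_dec; unfold Rabs; repeat destruct Rcase_abs; lra.
Qed.

Lemma round_nat n t : 0 <= t <= INR n -> exists j, (j <= n)%nat /\ Rabs (t - INR j) <= 1 / 2.
Proof.
  induction n as [|n IH]; intros Ht.
  - exists 0%nat. simpl in *. split; [lia | rewrite Rabs_le_between; lra].
  - rewrite S_INR in Ht. destruct (Rle_dec t (INR n)) as [Hle|Hgt].
    + destruct (IH ltac:(lra)) as [j [Hj Hjt]]. exists j. split; [lia | assumption].
    + destruct (Rle_dec t (INR n + 1 / 2)).
      * exists n. split; [lia | apply Rabs_le; lra].
      * exists (S n). split; [lia | rewrite S_INR; apply Rabs_le; lra].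
Qed.

Lemma grid_round B dy K m v : 0 < B -> 0 < dy -> 2 * B / dy = INR K -> Rabs v <= B ->
  exists w, inY B dy m w /\ Rabs (w - v) <= dy / 2 ^ m / 2.
Proof.
  intros HB Hdy HK Hv. apply Rabs_le_between in Hv.
  assert (P2 : 0 < 2 ^ m) by (apply pow_lt; lra).
  set (s := dy / 2 ^ m).
  assert (Hs : 0 < s) by (apply Rdiv_lt_0_compat; assumption).
  assert (EK : INR (2 ^ m * K) = 2 ^ (m + 1) * B / dy).
  { rewrite mult_INR, pow_INR, <- HK, pow_add.
    replace (INR 2) with 2 by (simpl; ring). field. lra. }
  destruct (round_nat (2 ^ m * K) ((v + B) / s)) as [j [Hj Hjt]].
  { split; [apply Rdiv_le_0_compat; lra |]. rewrite EK.
    apply Rmult_le_reg_r with s; [assumption |]. unfold s.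
    replace ((v + B) / (dy / 2 ^ m) * (dy / 2 ^ m)) with (v + B) by (field; lra).
    replace (2 ^ (m + 1) * B / dy * (dy / 2 ^ m)) with (2 * B) by (rewrite pow_add; field; lra).
    lra. }
  exists (- B + INR j * dy / 2 ^ m). split.
  - exists j. split; [rewrite <- EK; apply le_INR; assumption | reflexivity].
  - replace (- B + INR j * dy / 2 ^ m - v) with (- (s * ((v + B) / s - INR j)))
      by (unfold s; field; lra).
    rewrite Rabs_Ropp, Rabs_mult, (Rabs_right s) by lra.
    replace (dy / 2 ^ m / 2) with (s * (1 / 2)) by (unfold s; field; lra).
    apply Rmult_le_compat_l; lra.
Qed.

Lemma taylor_small_coeffs n d x0 x s : 0 <= s -> (forall i, (i <= n)%nat -> Rabs (d i) <= s / 2) ->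
  Rabs (x - x0) <= 1 / 2 -> Rabs (taylor n d x0 x) <= s * (1 - (1 / 2) ^ S n).
Proof.
  intros Hs Hd Hx. induction n as [|n IH].
  - rewrite taylor_O. specialize (Hd 0%nat (le_n _)). simpl. lra.
  - rewrite taylor_S. eapply Rle_trans; [apply Rabs_triang |].
    assert (Hterm : Rabs (d (S n) / INR (fact (S n)) * (x - x0) ^ S n) <= s / 2 * (1 / 2) ^ S n).
    { unfold Rdiv. rewrite !Rabs_mult, <- RPow_abs.
      assert (Hf : 1 <= INR (fact (S n))) by (apply (le_INR 1); pose proof (lt_O_fact (S n)); lia).
      rewrite (Rabs_right (/ INR (fact (S n)))) by (left; apply Rinv_0_lt_compat; lra).
      assert (/ INR (fact (S n)) <= 1) by (rewrite <- Rinv_1; apply Rinv_le_contravar; lra).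
      assert (0 < / INR (fact (S n))) by (apply Rinv_0_lt_compat; lra).
      assert (Rabs (d (S n)) <= s * / 2) by (apply Hd; lia).
      pose proof (Rabs_pos (d (S n))).
      apply Rmult_le_compat; [apply Rmult_le_pos; lra | apply pow_le, Rabs_pos | nra |].
      apply pow_incr. split; [apply Rabs_pos | assumption]. }
    assert (IH' := IH ltac:(intros i Hi; apply Hd; lia)).
    simpl in *. lra.
Qed.

(** * Approximation on one cell *)

Lemma holder_error_on_cell lam q alpha gamma m r :
  0 < lam -> 0 <= alpha -> INR q + alpha >= 1 / 2 -> 0 < gamma -> 0 <= r ->
  r <= 2 * powr (INR (fact q) * gamma / (2 * lam)) (1 / (INR q + alpha)) / (2 * 4 ^ m) ->
  lam * powr r (INR q + alpha) / INR (fact q) <= gamma / 2 ^ m / 2.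
Proof.
  intros Hlam Halpha Hbeta Hgamma Hr Hrm.
  pose proof (INR_fact_lt_0 q) as Hfact.
  pose proof (pos_INR q).
  set (Y := INR (fact q) * gamma / (2 * lam)) in *.
  assert (HY : 0 < Y) by (apply Rdiv_lt_0_compat; nra).
  assert (P4 : 0 < 4 ^ m) by (apply pow_lt; lra).
  replace (2 * powr Y (1 / (INR q + alpha)) / (2 * 4 ^ m))
    with (powr Y (1 / (INR q + alpha)) / 4 ^ m) in Hrm by (field; lra).
  apply Rle_trans with (lam * (Y / 2 ^ m) / INR (fact q)).
  - unfold Rdiv at 1 3. apply Rmult_le_compat_r; [left; apply Rinv_0_lt_compat; lra |].
    apply Rmult_le_compat_l; [lra |]. eapply Rle_trans.
    + apply powr_le_compat; [split; [exact Hr | exact Hrm] | lra].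
    + apply powr_root_div_pow4; lra.
  - right. unfold Y. field. repeat split; try lra. apply pow_nonzero; lra.
Qed.

Lemma taylor_rounding_error q d x0 x dy gamma m : 0 < gamma -> dy = gamma / exp 1 ->
  (forall i, (i <= q)%nat -> Rabs (d i) <= dy / 2 ^ m / 2) -> Rabs (x - x0) <= 1 / 2 ->
  Rabs (taylor q d x0 x) <= gamma / 2 ^ m / 2.
Proof.
  intros Hgamma Edy Hd Hx.
  assert (He : 2 < exp 1) by (pose proof (exp_ineq1 1 ltac:(lra)); lra).
  assert (P2 : 0 < 2 ^ m) by (apply pow_lt; lra).
  assert (Hs : 0 < dy / 2 ^ m)
    by (rewrite Edy; apply Rdiv_lt_0_compat; [apply Rdiv_lt_0_compat |]; lra).
  eapply Rle_trans; [apply (taylor_small_coeffs _ _ _ _ (dy / 2 ^ m)); [lra | assumption ..] |].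
  assert (0 < (1 / 2) ^ S q) by (apply pow_lt; lra).
  apply Rle_trans with (dy / 2 ^ m); [nra |].
  rewrite Edy. unfold Rdiv. rewrite !Rmult_assoc. apply Rmult_le_compat_l; [lra |].
  rewrite Rmult_comm. apply Rmult_le_compat_l; [left; apply Rinv_0_lt_compat; assumption |].
  apply Rinv_le_contravar; lra.
Qed.

Lemma local_approximation B lam q alpha gamma dx dy K f m x0 :
  0 < B -> 0 < lam -> 0 <= alpha -> INR q + alpha >= 1 / 2 -> 0 < gamma ->
  dx = 2 * powr (INR (fact q) * gamma / (2 * lam)) (1 / (INR q + alpha)) -> dx <= 1 ->
  dy = gamma / exp 1 -> 2 * B / dy = INR K ->
  HolderClass B lam q alpha f -> 0 <= x0 <= 1 ->
  exists c, (forall i, (i <= q)%nat -> inY B dy m (c i)) /\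
    forall x, 0 <= x <= 1 -> Rabs (x - x0) <= dx / (2 * 4 ^ m) ->
      Rabs (f x - clip B (taylor q c x0 x)) <= gamma / 2 ^ m.
Proof.
  intros HB Hlam Halpha Hbeta Hgamma Edx Hdx1 Edy HK [D [HD0 [HD [HDB HH]]]] Hx0.
  assert (He : 2 < exp 1) by (pose proof (exp_ineq1 1 ltac:(lra)); lra).
  assert (Hdy : 0 < dy) by (rewrite Edy; apply Rdiv_lt_0_compat; lra).
  assert (P4 : 1 <= 4 ^ m) by (apply pow_R1_Rle; lra).
  assert (Hgrid : forall i, exists w, inY B dy m w /\ Rabs (w - clip B (D i x0)) <= dy / 2 ^ m / 2).
  { intros i. apply (grid_round B dy K); [assumption .. | apply clip_bound; lra]. }
  destruct (functional_choice _ Hgrid) as [c Hc].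
  exists c. split; [intros i _; apply Hc |]. intros x Hx Hxx0.
  assert (Hfx : f x = clip B (f x)).
  { rewrite clip_id; [reflexivity |]. rewrite <- HD0 by assumption. apply HDB; [lia | assumption]. }
  rewrite Hfx at 1. eapply Rle_trans; [apply clip_contract; lra |].
  replace (f x - taylor q c x0 x) with
    ((f x - taylor q (fun i => D i x0) x0 x) + (taylor q (fun i => D i x0) x0 x - taylor q c x0 x))
    by ring.
  eapply Rle_trans; [apply Rabs_triang |]. rewrite taylor_minus.
  assert (Hhalf : Rabs (x - x0) <= 1 / 2).
  { eapply Rle_trans; [exact Hxx0 |].
    apply Rmult_le_reg_r with (2 * 4 ^ m); [lra |].
    unfold Rdiv. rewrite Rmult_assoc, Rinv_l by lra. nra. }
  assert (Htaylor : Rabs (f x - taylor q (fun i => D i x0) x0 x) <= gamma / 2 ^ m / 2).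
  { eapply Rle_trans; [apply (taylor_holder_error lam alpha); assumption |].
    apply holder_error_on_cell; [assumption .. | apply Rabs_pos | rewrite <- Edx; assumption]. }
  assert (Hround : Rabs (taylor q (fun i => D i x0 - c i) x0 x) <= gamma / 2 ^ m / 2).
  { apply (taylor_rounding_error _ _ _ _ dy); [assumption .. | | assumption].
    intros i Hi. destruct (Hc i) as [_ Hci].
    rewrite clip_id in Hci by (apply HDB; assumption).
    rewrite Rabs_minus_sym. exact Hci. }
  lra.
Qed.

Lemma ind_true (P : Prop) : P -> Defs.ind P = 1.
Proof. intros HP. unfold Defs.ind. destruct excluded_middle_informative; tauto. Qed.

Lemma ind_false (P : Prop) : ~ P -> Defs.ind P = 0.
Proof. intros HP. unfold Defs.ind. destruct excluded_middle_informative; tauto. Qed.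

Lemma sum_n_m_zero (F : nat -> R) lo hi : (forall j, (lo <= j <= hi)%nat -> F j = 0) ->
  sum_n_m F lo hi = 0.
Proof.
  intros HF. rewrite (sum_n_m_ext_loc F (fun _ => zero)) by (intros j Hj; rewrite HF; auto).
  exact (@sum_n_m_const_zero R_AbelianMonoid lo hi).
Qed.

Lemma sum_n_m_single (F : nat -> R) lo hi k : (lo <= k <= hi)%nat ->
  (forall j, (lo <= j <= hi)%nat -> j <> k -> F j = 0) -> sum_n_m F lo hi = F k.
Proof.
  intros Hk HF. rewrite (sum_n_m_Chasles F lo k hi) by lia.
  rewrite (sum_n_m_zero F (S k) hi) by (intros j Hj; apply HF; lia).
  destruct (Nat.eq_dec lo k) as [<-|Hne].
  - rewrite sum_n_n. apply Rplus_0_r.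
  - destruct k as [|k]; [lia |]. rewrite sum_n_Sm by lia.
    rewrite (sum_n_m_zero F lo k) by (intros j Hj; apply HF; lia).
    change (0 + F (S k) + 0 = F (S k)). ring.
Qed.

Lemma sum_n_m_indicator (F : nat -> R) (P : nat -> Prop) lo hi k : (lo <= k <= hi)%nat -> P k ->
  (forall j, (lo <= j <= hi)%nat -> P j -> j = k) ->
  sum_n_m (fun j => F j * Defs.ind (P j)) lo hi = F k.
Proof.
  intros Hk HPk Huniq. rewrite (sum_n_m_single _ lo hi k Hk).
  - rewrite ind_true by assumption. apply Rmult_1_r.
  - intros j Hj Hjk. rewrite ind_false; [apply Rmult_0_r |].
    intros HPj. apply Hjk, Huniq; assumption.
Qed.

Lemma sum_n_m_telescope (V : nat -> R) M : (1 <= M)%nat ->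
  sum_n_m (fun m => V m - V (m - 1)%nat) 1 M = V M - V 0%nat.
Proof.
  induction M as [|M IH]; intros HM; [lia |].
  destruct (Nat.eq_dec M 0) as [->|Hne]; [rewrite sum_n_n; reflexivity |].
  rewrite sum_n_Sm, IH by lia.
  change (V M - V 0%nat + (V (S M) - V (S M - 1)%nat) = V (S M) - V 0%nat).
  replace (S M - 1)%nat with M by lia. ring.
Qed.

Lemma inIv_weaken lo hi lo' hi' x : lo' <= lo -> hi <= hi' -> lo <= hi ->
  inIv lo hi x -> inIv lo' hi' x.
Proof.
  unfold inIv. intros Hlo Hhi Hlh [Hx|[-> Hx1]]; [left; lra |].
  destruct (Req_dec hi hi') as [<-|]; [right; split; auto | left; lra].
Qed.

Lemma inIv_center_dist lo hi x : lo <= hi -> inIv lo hi x ->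
  Rabs (x - (lo + hi) / 2) <= (hi - lo) / 2.
Proof. unfold inIv. intros Hlh Hx. apply Rabs_le. destruct Hx as [Hx|[-> _]]; lra. Qed.

Lemma cell_exists L h K x : 0 < h -> L <= x < L + INR K * h ->
  exists k, (1 <= k <= K)%nat /\ L + (INR k - 1) * h <= x < L + INR k * h.
Proof.
  intros Hh. induction K as [|K IH]; intros Hx; [simpl in Hx; lra |].
  rewrite S_INR in Hx. destruct (Rlt_dec x (L + INR K * h)) as [Hlt|Hge].
  - destruct (IH ltac:(lra)) as [k [Hk Hkx]]. exists k. split; [lia | assumption].
  - exists (S K). split; [lia | rewrite S_INR; lra].
Qed.

Lemma inIv_cell_exists L h K x : 0 < h -> (1 <= K)%nat -> inIv L (L + INR K * h) x ->
  exists k, (1 <= k <= K)%nat /\ inIv (L + (INR k - 1) * h) (L + INR k * h) x.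
Proof.
  intros Hh HK [Hx|Hx].
  - destruct (cell_exists L h K x Hh Hx) as [k [Hk Hkx]].
    exists k. split; [assumption | left; exact Hkx].
  - exists K. split; [lia | right; exact Hx].
Qed.

Lemma inIv_cell_unique L h K x j k : 0 < h -> L + INR K * h <= 1 ->
  (1 <= j <= K)%nat -> (1 <= k <= K)%nat ->
  inIv (L + (INR j - 1) * h) (L + INR j * h) x ->
  inIv (L + (INR k - 1) * h) (L + INR k * h) x -> j = k.
Proof.
  intros Hh HL.
  enough (Hlt : forall j k, (1 <= j <= K)%nat -> (1 <= k <= K)%nat -> (j < k)%nat ->
            inIv (L + (INR j - 1) * h) (L + INR j * h) x ->
            inIv (L + (INR k - 1) * h) (L + INR k * h) x -> False).
  { intros Hj Hk Hjx Hkx. destruct (Nat.lt_trichotomy j k) as [C|[C|C]]; [| exact C |];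
      exfalso; eauto. }
  clear j k. intros j k Hj Hk Hjk Hjx Hkx.
  assert (Hjk' : INR j + 1 <= INR k) by (rewrite <- S_INR; apply le_INR; lia).
  assert (HkK : INR k <= INR K) by (apply le_INR; lia).
  assert (0 <= (INR k - 1 - INR j) * h) by (apply Rmult_le_pos; lra).
  assert (0 < (INR K - INR j) * h) by (apply Rmult_lt_0_compat; lra).
  unfold inIv in Hjx, Hkx. destruct Hkx as [Hkx|[Hkx _]], Hjx as [Hjx|[Hjx Hj1]]; nra.
Qed.

Section Cells.
Variables (dx : R) (N : nat).
Hypothesis dx_pos : 0 < dx.
Hypothesis N_dx : INR N * dx = 1.

Lemma inIsub_as_cell a m n x :
  inIsub dx a m n x <->
  inIv ((INR a - 1) * dx + (INR n - 1) * (dx / 4 ^ m)) ((INR a - 1) * dx + INR n * (dx / 4 ^ m)) x.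
Proof. unfold inIsub, Rdiv. rewrite !Rmult_assoc. reflexivity. Qed.

Lemma inI_cell_exists x : 0 <= x <= 1 -> exists a, (1 <= a <= N)%nat /\ inI dx a x.
Proof.
  intros Hx. destruct (inIv_cell_exists 0 dx N x dx_pos) as [a [Ha Hax]].
  - destruct N; [simpl in N_dx; lra | lia].
  - rewrite Rplus_0_l, N_dx. destruct (Req_dec x 1); [right | left]; lra.
  - exists a. split; [assumption |]. unfold inI. rewrite !Rplus_0_l in Hax. exact Hax.
Qed.

Lemma inI_cell_unique x a b : (1 <= a <= N)%nat -> (1 <= b <= N)%nat ->
  inI dx a x -> inI dx b x -> a = b.
Proof.
  intros Ha Hb Hax Hbx. apply (inIv_cell_unique 0 dx N x); try assumption;
    [rewrite Rplus_0_l, N_dx; lra | unfold inI in *; rewrite !Rplus_0_l; assumption ..].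
Qed.

Lemma inI_upper a : (a <= N)%nat -> INR a * dx <= 1.
Proof. intros Ha. rewrite <- N_dx. apply Rmult_le_compat_r; [lra | apply le_INR; assumption]. Qed.

Lemma pow4_pos m : 0 < 4 ^ m.
Proof. apply pow_lt; lra. Qed.

Lemma INR_pow4 m : INR (4 ^ m) = 4 ^ m.
Proof. rewrite pow_INR. f_equal. simpl. ring. Qed.

Lemma inIsub_cell_exists a m x : inI dx a x ->
  exists n, (1 <= n <= 4 ^ m)%nat /\ inIsub dx a m n x.
Proof.
  intros Hax. pose proof (pow4_pos m).
  destruct (inIv_cell_exists ((INR a - 1) * dx) (dx / 4 ^ m) (4 ^ m) x) as [n [Hn Hnx]].
  - apply Rdiv_lt_0_compat; assumption.
  - pose proof (Nat.pow_nonzero 4 m). lia.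
  - rewrite INR_pow4. replace ((INR a - 1) * dx + 4 ^ m * (dx / 4 ^ m)) with (INR a * dx)
      by (field; lra). exact Hax.
  - exists n. split; [assumption | apply inIsub_as_cell; exact Hnx].
Qed.

Lemma inIsub_cell_unique a m x n n' : (a <= N)%nat ->
  (1 <= n <= 4 ^ m)%nat -> (1 <= n' <= 4 ^ m)%nat ->
  inIsub dx a m n x -> inIsub dx a m n' x -> n = n'.
Proof.
  intros Ha Hn Hn' Hnx Hn'x. pose proof (pow4_pos m).
  apply (inIv_cell_unique ((INR a - 1) * dx) (dx / 4 ^ m) (4 ^ m) x); try assumption;
    [apply Rdiv_lt_0_compat; assumption | | apply inIsub_as_cell; assumption ..].
  rewrite INR_pow4. replace ((INR a - 1) * dx + 4 ^ m * (dx / 4 ^ m)) with (INR a * dx)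
    by (field; lra). apply inI_upper; assumption.
Qed.

Lemma inIsub_inI a m n x : (1 <= n <= 4 ^ m)%nat -> inIsub dx a m n x -> inI dx a x.
Proof.
  intros Hn Hnx. apply inIsub_as_cell in Hnx. pose proof (pow4_pos m).
  assert (1 <= INR n) by (apply (le_INR 1); lia).
  assert (INR n <= 4 ^ m) by (rewrite <- INR_pow4; apply le_INR; lia).
  assert (Hdx : dx = 4 ^ m * (dx / 4 ^ m)) by (field; lra).
  assert (Hu : 0 < dx / 4 ^ m) by (apply Rdiv_lt_0_compat; assumption).
  set (u := dx / 4 ^ m) in *. unfold inI. rewrite Hdx.
  eapply inIv_weaken; [| | | exact Hnx]; nra.
Qed.

Lemma inI_center_dist a x : inI dx a x -> Rabs (x - xc dx a) <= dx / (2 * 4 ^ 0).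
Proof.
  intros Hax. unfold xc. replace ((INR a - 1 / 2) * dx) with (((INR a - 1) * dx + INR a * dx) / 2)
    by field.
  replace (dx / (2 * 4 ^ 0)) with ((INR a * dx - (INR a - 1) * dx) / 2) by (simpl; field).
  apply inIv_center_dist; [lra | exact Hax].
Qed.

Lemma inIsub_center_dist a m n x : inIsub dx a m n x ->
  Rabs (x - xcsub dx a m n) <= dx / (2 * 4 ^ m).
Proof.
  intros Hnx. apply inIsub_as_cell in Hnx. pose proof (pow4_pos m).
  assert (Hu : 0 < dx / 4 ^ m) by (apply Rdiv_lt_0_compat; assumption).
  set (lo := (INR a - 1) * dx + (INR n - 1) * (dx / 4 ^ m)) in Hnx.
  set (hi := (INR a - 1) * dx + INR n * (dx / 4 ^ m)) in Hnx.
  unfold xcsub. replace ((INR a - 1) * dx + (INR n - 1 / 2) * dx / 4 ^ m) with ((lo + hi) / 2)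
    by (unfold lo, hi; field; lra).
  replace (dx / (2 * 4 ^ m)) with ((hi - lo) / 2) by (unfold lo, hi; field; lra).
  apply inIv_center_dist; [unfold lo, hi; lra | exact Hnx].
Qed.

Lemma xc_in01 a : (1 <= a <= N)%nat -> 0 <= xc dx a <= 1.
Proof.
  intros Ha. unfold xc. assert (1 <= INR a) by (apply (le_INR 1); lia).
  pose proof (inI_upper a ltac:(lia)). nra.
Qed.

Lemma xcsub_in01 a m n : (1 <= a <= N)%nat -> (1 <= n <= 4 ^ m)%nat -> 0 <= xcsub dx a m n <= 1.
Proof.
  intros Ha Hn. pose proof (pow4_pos m). pose proof (inI_upper a ltac:(lia)).
  assert (1 <= INR a) by (apply (le_INR 1); lia).
  assert (1 <= INR n) by (apply (le_INR 1); lia).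
  assert (INR n <= 4 ^ m) by (rewrite <- INR_pow4; apply le_INR; lia).
  assert (Hdx : dx = 4 ^ m * (dx / 4 ^ m)) by (field; lra).
  assert (Hu : 0 < dx / 4 ^ m) by (apply Rdiv_lt_0_compat; assumption).
  unfold xcsub. replace ((INR n - 1 / 2) * dx / 4 ^ m) with ((INR n - 1 / 2) * (dx / 4 ^ m))
    by (field; lra).
  set (u := dx / 4 ^ m) in *. rewrite Hdx in *. split; nra.
Qed.

Lemma inIsub_parent a m n x : (1 <= m)%nat -> (1 <= n)%nat ->
  inIsub dx a m n x -> inIsub dx a (m - 1) ((n + 3) / 4) x.
Proof.
  intros Hm Hn Hnx. apply inIsub_as_cell in Hnx. apply inIsub_as_cell.
  set (p := ((n + 3) / 4)%nat).
  pose proof (Nat.div_mod (n + 3) 4 ltac:(lia)) as Hdiv.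
  pose proof (Nat.mod_upper_bound (n + 3) 4 ltac:(lia)) as Hmod.
  fold p in Hdiv.
  assert (Hn4p : INR n <= 4 * INR p).
  { replace 4 with (INR 4) by (simpl; ring). rewrite <- mult_INR. apply le_INR. lia. }
  assert (H4pn : 4 * INR p <= INR n + 3).
  { replace 4 with (INR 4) by (simpl; ring). replace 3 with (INR 3) by (simpl; ring).
    rewrite <- mult_INR, <- plus_INR. apply le_INR. lia. }
  assert (1 <= INR n) by (apply (le_INR 1); lia).
  assert (E4 : 4 ^ m = 4 * 4 ^ (m - 1)) by (replace m with (S (m - 1)) at 1 by lia; reflexivity).
  rewrite E4 in Hnx.
  pose proof (pow4_pos (m - 1)).
  assert (Hu : 0 < dx / (4 * 4 ^ (m - 1))) by (apply Rdiv_lt_0_compat; lra).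
  replace (dx / 4 ^ (m - 1)) with (4 * (dx / (4 * 4 ^ (m - 1)))) by (field; lra).
  set (u := dx / (4 * 4 ^ (m - 1))) in *.
  eapply inIv_weaken; [| | | exact Hnx]; nra.
Qed.

Lemma sum_over_cells x (F : nat -> R) : 0 <= x <= 1 ->
  exists a, (1 <= a <= N)%nat /\ inI dx a x /\
    sum_n_m (fun b => F b * Defs.ind (inI dx b x)) 1 N = F a.
Proof.
  intros Hx. destruct (inI_cell_exists x Hx) as [a [Ha Hax]].
  exists a. repeat split; try lia; [assumption |].
  apply sum_n_m_indicator; [assumption .. |].
  intros b Hb Hbx. apply (inI_cell_unique x); assumption.
Qed.

Lemma sum_over_subcells m x (F : nat -> nat -> R) : 0 <= x <= 1 ->
  exists a n, (1 <= a <= N)%nat /\ (1 <= n <= 4 ^ m)%nat /\ inIsub dx a m n x /\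
    sum_n_m (fun b => sum_n_m (fun k =>
      F b k * Defs.ind (inIsub dx b m k x)) 1 (4 ^ m)) 1 N = F a n.
Proof.
  intros Hx. destruct (inI_cell_exists x Hx) as [a [Ha Hax]].
  destruct (inIsub_cell_exists a m x Hax) as [n [Hn Hnx]].
  exists a, n. repeat split; try lia; [assumption |].
  rewrite (sum_n_m_single _ 1 N a Ha).
  - apply sum_n_m_indicator; [assumption .. |].
    intros k Hk Hkx. apply (inIsub_cell_unique a m x); [lia | assumption ..].
  - intros b Hb Hba. apply sum_n_m_zero. intros k Hk.
    rewrite ind_false; [apply Rmult_0_r |].
    intros Hkx. apply Hba, (inI_cell_unique x); [assumption .. | | assumption].
    eapply inIsub_inI; eassumption.
Qed.

End Cells.

Lemma parent_index_range m n : (1 <= m)%nat -> (1 <= n <= 4 ^ m)%nat ->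
  (1 <= (n + 3) / 4 <= 4 ^ (m - 1))%nat.
Proof.
  intros Hm Hn.
  assert (E : (4 ^ m = 4 * 4 ^ (m - 1))%nat).
  { replace m with (S (m - 1)) at 1 by lia. apply Nat.pow_succ_r'. }
  pose proof (Nat.div_mod (n + 3) 4 ltac:(lia)).
  pose proof (Nat.mod_upper_bound (n + 3) 4 ltac:(lia)).
  lia.
Qed.

(** * The multiscale approximant *)

Section Construction.
Variables (B dx dy gamma : R) (q N : nat) (f : R -> R) (C : nat -> R -> nat -> R).
Hypothesis dx_pos : 0 < dx.
Hypothesis N_dx : INR N * dx = 1.
Hypothesis C_grid : forall m x0 i, (i <= q)%nat -> inY B dy m (C m x0 i).
Hypothesis C_approx : forall m x0 x, 0 <= x0 <= 1 -> 0 <= x <= 1 ->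
  Rabs (x - x0) <= dx / (2 * 4 ^ m) ->
  Rabs (f x - clip B (taylor q (C m x0) x0 x)) <= gamma / 2 ^ m.

Definition approximant (m : nat) (x0 x : R) : R := clip B (taylor q (C m x0) x0 x).

Definition P0 (a : nat) : R -> R := approximant 0 (xc dx a).

Definition Psub (m a n : nat) : R -> R := approximant m (xcsub dx a m n).

(* [(n + 3) / 4] is the index [n_(m-1)] of the subinterval containing [I_a^(m,n)]. *)
Definition Pparent (m a n : nat) : R -> R :=
  if (m <=? 1)%nat then P0 a else Psub (m - 1) a ((n + 3) / 4).

Definition Qcorr (m a n : nat) (x : R) : R :=
  clip (3 * gamma / 2 ^ m) (Psub m a n x - Pparent m a n x).

Definition level (m : nat) (x : R) : R :=
  match m with
  | O => sum_n_m (fun a => P0 a x * Defs.ind (inI dx a x)) 1 N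
  | S _ => sum_n_m (fun a => sum_n_m (fun n =>
             Psub m a n x * Defs.ind (inIsub dx a m n x)) 1 (4 ^ m)) 1 N
  end.

Definition correction (m : nat) (x : R) : R :=
  sum_n_m (fun a => sum_n_m (fun n =>
    Qcorr m a n x * Defs.ind (inIsub dx a m n x)) 1 (4 ^ m)) 1 N.

Lemma P0_inP0 a : inP0 B dx dy q a (P0 a).
Proof. exists (C 0%nat (xc dx a)). split; [apply C_grid | reflexivity]. Qed.

Lemma Psub_inP m a n : inP B dx dy q a m n (Psub m a n).
Proof. exists (C m (xcsub dx a m n)). split; [apply C_grid | reflexivity]. Qed.

Lemma Qcorr_inQ m a n : (1 <= m)%nat -> (1 <= n <= 4 ^ m)%nat ->
  inQ B dx dy gamma q a m n (Qcorr m a n).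
Proof.
  intros Hm Hn. exists (Psub m a n), (Pparent m a n).
  split; [apply Psub_inP |]. split; [| reflexivity]. unfold Pparent.
  destruct (Nat.leb_spec m 1) as [Hm1|Hm1].
  - left. split; [lia | apply P0_inP0].
  - right. split; [lia |]. exists ((n + 3) / 4)%nat.
    split; [apply parent_index_range; lia |].
    split; [intros x Hx; apply inIsub_parent; solve [assumption | lia] | apply Psub_inP].
Qed.

Lemma level_at_cell m a n x : (1 <= m)%nat -> 0 <= x <= 1 ->
  (1 <= a <= N)%nat -> (1 <= n <= 4 ^ m)%nat -> inIsub dx a m n x ->
  level m x = Psub m a n x /\ level (m - 1) x = Pparent m a n x.
Proof.
  intros Hm Hx Ha Hn Hnx.
  assert (Hlevel : forall k b p, (1 <= k)%nat -> (1 <= b <= N)%nat -> (1 <= p <= 4 ^ k)%nat ->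
            inIsub dx b k p x -> level k x = Psub k b p x).
  { intros k b p Hk Hb Hp Hpx. destruct k as [|k]; [lia |].
    destruct (sum_over_subcells dx N dx_pos N_dx (S k) x (fun b p => Psub (S k) b p x) Hx)
      as [b' [p' [Hb' [Hp' [Hp'x Hsum]]]]].
    unfold level. rewrite Hsum.
    assert (b' = b) as -> by (apply (inI_cell_unique dx N dx_pos N_dx x);
      [assumption .. | apply (inIsub_inI dx dx_pos b' (S k) p'); assumption
                     | apply (inIsub_inI dx dx_pos b (S k) p); assumption]).
    assert (p' = p) as ->
      by (apply (inIsub_cell_unique dx N dx_pos N_dx b (S k) x); [lia | assumption ..]).
    reflexivity. }
  split; [apply Hlevel; assumption |]. unfold Pparent.
  destruct (Nat.leb_spec m 1) as [Hm1|Hm1].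
  - replace (m - 1)%nat with 0%nat by lia. simpl level.
    assert (Hax : inI dx a x) by (apply (inIsub_inI dx dx_pos a m n); assumption).
    apply (sum_n_m_indicator (fun b => P0 b x) (fun b => inI dx b x)); [assumption .. |].
    intros b Hb Hbx. apply (inI_cell_unique dx N dx_pos N_dx x); assumption.
  - apply Hlevel; [lia | assumption | apply parent_index_range; lia |].
    apply inIsub_parent; solve [assumption | lia].
Qed.

Lemma level_error m x : 0 <= x <= 1 -> Rabs (f x - level m x) <= gamma / 2 ^ m.
Proof.
  intros Hx. destruct m as [|m].
  - destruct (sum_over_cells dx N dx_pos N_dx x (fun a => P0 a x) Hx) as [a [Ha [Hax Hsum]]].
    unfold level. rewrite Hsum.
    apply C_approx; [apply (xc_in01 dx N) | | apply inI_center_dist]; assumption.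
  - destruct (sum_over_subcells dx N dx_pos N_dx (S m) x (fun a n => Psub (S m) a n x) Hx)
      as [a [n [Ha [Hn [Hnx Hsum]]]]].
    unfold level. rewrite Hsum.
    apply C_approx; [apply (xcsub_in01 dx N) | | apply inIsub_center_dist]; assumption.
Qed.

(* Consecutive levels differ by at most [gamma/2^m + gamma/2^(m-1) = 3 gamma/2^m],
   so the clipping in [Qcorr] is inactive. *)
Lemma correction_eq m x : (1 <= m)%nat -> 0 <= x <= 1 ->
  correction m x = level m x - level (m - 1) x.
Proof.
  intros Hm Hx.
  destruct (sum_over_subcells dx N dx_pos N_dx m x (fun a n => Qcorr m a n x) Hx)
    as [a [n [Ha [Hn [Hnx Hsum]]]]].
  unfold correction. rewrite Hsum. unfold Qcorr.
  destruct (level_at_cell m a n x Hm Hx Ha Hn Hnx) as [<- <-].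
  apply clip_id.
  pose proof (level_error m x Hx). pose proof (level_error (m - 1) x Hx).
  assert (E2 : 2 ^ m = 2 * 2 ^ (m - 1)) by (replace m with (S (m - 1)) at 1 by lia; reflexivity).
  assert (0 < 2 ^ (m - 1)) by (apply pow_lt; lra).
  replace (level m x - level (m - 1) x) with
    ((f x - level (m - 1) x) - (f x - level m x)) by ring.
  eapply Rle_trans; [apply Rabs_triang |]. rewrite Rabs_Ropp.
  rewrite E2 in *.
  replace (3 * gamma / (2 * 2 ^ (m - 1))) with
    (gamma / 2 ^ (m - 1) + gamma / (2 * 2 ^ (m - 1))) by (field; lra).
  lra.
Qed.

Lemma level0_inF0 : inF0 B dx dy q N (level 0).
Proof. exists P0. split; [intros a _; apply P0_inP0 | reflexivity]. Qed.

Lemma multiscale_inFM M :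
  inFM B dx dy gamma q N M (fun x => level 0 x + sum_n_m (fun m => correction m x) 1 M).
Proof.
  exists P0, Qcorr. split; [intros a _; apply P0_inP0 |].
  split; [intros m a n Hm _ Hn; apply Qcorr_inQ; lia | reflexivity].
Qed.

Lemma multiscale_error M x : (1 <= M)%nat -> 0 <= x <= 1 ->
  Rabs (f x - (level 0 x + sum_n_m (fun m => correction m x) 1 M)) <= gamma / 2 ^ M.
Proof.
  intros HM Hx.
  rewrite (sum_n_m_ext_loc _ (fun m => level m x - level (m - 1)%nat x))
    by (intros m Hm; apply correction_eq; [lia | assumption]).
  rewrite sum_n_m_telescope by assumption.
  replace (level 0 x + (level M x - level 0 x)) with (level M x) by ring.
  apply level_error; assumption.
Qed.

End Construction.

Lemma inY_lower B dy m : 0 < B -> 0 < dy -> inY B dy m (- B).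
Proof.
  intros HB Hdy. exists 0%nat. split; [| simpl; field; apply pow_nonzero; lra].
  simpl INR. apply Rdiv_le_0_compat; [| assumption].
  apply Rmult_le_pos; [left; apply pow_lt |]; lra.
Qed.

Lemma coefficient_selector B lam q alpha gamma dx dy K f :
  0 < B -> 0 < lam -> 0 <= alpha -> INR q + alpha >= 1 / 2 -> 0 < gamma ->
  dx = 2 * powr (INR (fact q) * gamma / (2 * lam)) (1 / (INR q + alpha)) -> dx <= 1 ->
  dy = gamma / exp 1 -> 2 * B / dy = INR K -> HolderClass B lam q alpha f ->
  exists C : nat -> R -> nat -> R,
    (forall m x0 i, (i <= q)%nat -> inY B dy m (C m x0 i)) /\
    (forall m x0 x, 0 <= x0 <= 1 -> 0 <= x <= 1 -> Rabs (x - x0) <= dx / (2 * 4 ^ m) ->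
       Rabs (f x - clip B (taylor q (C m x0) x0 x)) <= gamma / 2 ^ m).
Proof.
  intros HB Hlam Halpha Hbeta Hgamma Edx Hdx1 Edy HK Hf.
  assert (Hdy : 0 < dy) by (rewrite Edy; apply Rdiv_lt_0_compat; [| apply exp_pos]; lra).
  assert (Hpoint : forall m x0, exists c : nat -> R, (forall i, (i <= q)%nat -> inY B dy m (c i)) /\
    (0 <= x0 <= 1 -> forall x, 0 <= x <= 1 -> Rabs (x - x0) <= dx / (2 * 4 ^ m) ->
       Rabs (f x - clip B (taylor q c x0 x)) <= gamma / 2 ^ m)).
  { intros m x0. destruct (Rle_dec 0 x0), (Rle_dec x0 1).
    2-4: exists (fun _ => - B); split; [intros i _; apply inY_lower; assumption | intros; lra].
    destruct (local_approximation B lam q alpha gamma dx dy K f m x0) as [c [Hcg Hca]];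
      try assumption; [lra |].
    exists c. split; [assumption | intros _; exact Hca]. }
  destruct (functional_choice _ (fun m => functional_choice _ (Hpoint m))) as [C HC].
  exists C. split; [intros m x0; apply (HC m x0) | intros m x0 x Hx0; apply (HC m x0); assumption].
Qed.

Theorem lemma10 (B lam : R) (q : nat) (alpha gamma : R) (N : nat) :
  0 < B -> 0 < lam -> 0 < alpha <= 1 -> INR q + alpha >= 1 / 2 -> 0 < gamma ->
  let beta := INR q + alpha in
  let dx := 2 * powr (INR (fact q) * gamma / (2 * lam)) (1 / beta) in
  let dy := gamma / exp 1 in
  1 / dx = INR N ->
  (exists K : nat, 2 * B / dy = INR K) ->
  (forall f, HolderClass B lam q alpha f ->
     exists g, inF0 B dx dy q N g /\
       forall x, 0 <= x <= 1 -> Rabs (f x - g x) <= gamma) /\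
  (forall M : nat, (1 <= M)%nat -> forall f, HolderClass B lam q alpha f ->
     exists g, inFM B dx dy gamma q N M g /\
       forall x, 0 <= x <= 1 -> Rabs (f x - g x) <= gamma / 2 ^ M).
Proof.
  intros HB Hlam Halpha Hbeta Hgamma beta dx dy HN [K HK].
  assert (Hdx : 0 < dx).
  { apply Rmult_lt_0_compat; [lra | apply powr_pos].
    pose proof (INR_fact_lt_0 q). apply Rdiv_lt_0_compat; nra. }
  assert (HNdx : INR N * dx = 1) by (rewrite <- HN; field; lra).
  assert (Hdx1 : dx <= 1).
  { destruct N as [|N]; [simpl in HNdx; lra |].
    assert (1 <= INR (S N)) by (apply (le_INR 1); lia). nra. }
  pose proof (fun f => coefficient_selector B lam q alpha gamma dx dy K f HB Hlam
    ltac:(lra) Hbeta Hgamma eq_refl Hdx1 eq_refl HK) as Hselect.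
  split.
  - intros f Hf. destruct (Hselect f Hf) as [C [HCgrid HCapprox]].
    exists (level B dx q N C 0). split; [apply level0_inF0; assumption |].
    intros x Hx. replace gamma with (gamma / 2 ^ 0) by (simpl; field).
    apply (level_error B dx gamma q N f C); assumption.
  - intros M HM f Hf. destruct (Hselect f Hf) as [C [HCgrid HCapprox]].
    eexists. split; [apply (multiscale_inFM B dx dy gamma q N C); assumption |].
    intros x Hx. apply (multiscale_error B dx gamma q N f C); assumption.
Qed.
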